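(* Let $t\ge 1$ and $n\ge 1$ be integers and let $\mathcal{C}\subseteq\{0,1\}^n$ be a $t$-break-resilient code. For $i\in\{0,1,\ldots,n\}$ let $\mathcal{C}_i$ be the set of codewords of $\mathcal{C}$ of Hamming weight $i$, so that $\mathcal{C}=\mathcal{C}_0\cup\mathcal{C}_1\cup\cdots\cup\mathcal{C}_n$. Then for every $i\in\{1,\ldots,n\}$, the minimum Hamming distance of $\mathcal{C}_i$ is at least $\lceil\frac{t+1}{2}\rceil$ (i.e., any two distinct words of $\mathcal{C}_i$ differ in at least $\lceil\frac{t+1}{2}\rceil$ coordinates).
   Context: Breaking a binary string $\mathbf{x}\in\{0,1\}^n$ at $s\le t$ positions means choosing $s$ cut points between consecutive entries, producing $s+1$ (nonempty) consecutive substrings called fragments; the fragments are oriented (each is read left to right as in $\mathbf{x}$) but are given as an unordered multiset. Two words $\mathbf{x},\mathbf{y}\in\{0,1\}^n$ are $t$-confusable if there exist at most $t$ break positions in $\mathbf{x}$ and at most $t$ break positions in $\mathbf{y}$ that produce the same multiset of fragments. A code $\mathcal{C}\subseteq\{0,1\}^n$ is a $t$-break-resilient code ($t$-BRC) if no two distinct codewords of $\mathcal{C}$ are $t$-confusable, i.e., every codeword can be uniquely recovered from the unordered multiset of at most $t+1$ fragments resulting from any at most $t$ breaks. *)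

From mathcomp Require Import all_boot.
Set Implicit Arguments. Unset Strict Implicit. Unset Printing Implicit Defensive.

(* A breaking of a word x (as a sequence) at at most t positions:
   a list of nonempty consecutive fragments whose concatenation (in order)
   is x, with at most t+1 fragments (i.e. at most t cut points). *)
Definition breaking (t : nat) (x : seq bool) (fs : seq (seq bool)) : Prop :=
  [/\ flatten fs = x, all (fun f => size f > 0) fs & size fs <= t.+1].

(* x and y are t-confusable: some breaking of x and some breaking of y
   yield the same multiset of (oriented) fragments. *)
Definition confusable (t : nat) (x y : seq bool) : Prop :=
  exists fx fy, [/\ breaking t x fx, breaking t y fy & perm_eq fx fy].

Definition t_BRC (n t : nat) (C : {set n.-tuple bool}) : Prop :=
  forall x y : n.-tuple bool, x \in C -> y \in C -> x != y ->
    ~ confusable t (val x) (val y).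

Definition hweight (n : nat) (x : n.-tuple bool) : nat := count id x.

Definition hdist (n : nat) (x y : n.-tuple bool) : nat :=
  count (fun p => p.1 != p.2) (zip x y).

From mathcomp Require Import all_boot zify.

(* Zip two words of equal weight and cut right before and right after every
   position where they differ.  This uses at most 2 d cuts, d the Hamming
   distance, and leaves the same runs in both words together with the
   differing bits as one-letter fragments; equal weights make the multisets
   of these one-letter fragments equal.  Hence two such words at distance
   d <= t/2 are t-confusable. *)

Lemma flatten_filter_nonempty (T : Type) (fs : seq (seq T)) :
  flatten [seq f <- fs | 0 < size f] = flatten fs.
Proof. by elim: fs => [|[|a f] fs IH] //=; rewrite IH. Qed.

Lemma breaking_filter_nonempty t (x : seq bool) fs :
  flatten fs = x -> size fs <= t.+1 -> breaking t x [seq f <- fs | 0 < size f].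
Proof.
move=> fsx fs_le; split.
- by rewrite flatten_filter_nonempty.
- exact: filter_all.
- by rewrite size_filter (leq_trans (count_size _ _)).
Qed.

Lemma confusable_pieces t (x y : seq bool) fx fy :
  flatten fx = x -> flatten fy = y -> size fx <= t.+1 -> perm_eq fx fy ->
  confusable t x y.
Proof.
move=> fxx fyy fx_le fxy.
exists [seq f <- fx | 0 < size f], [seq f <- fy | 0 < size f]; split.
- exact: breaking_filter_nonempty.
- by apply: breaking_filter_nonempty; rewrite // -(perm_size fxy).
- exact: perm_filter.
Qed.

Lemma perm_map_neq (T U : eqType) (f g : T -> U) (s : seq T) :
  perm_eq [seq f a | a <- s & f a != g a] [seq g a | a <- s & f a != g a] ->
  perm_eq (map f s) (map g s).
Proof.
set P := fun a => f a != g a => perm_neq.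
have split_s : perm_eq s (filter P s ++ filter (predC P) s).
  by rewrite perm_sym perm_filterC.
apply: (perm_trans (perm_map f split_s)); rewrite perm_sym.
apply: (perm_trans (perm_map g split_s)); rewrite perm_sym !map_cat perm_cat //.
suff -> : map f (filter (predC P) s) = map g (filter (predC P) s) by [].
by apply/eq_in_map => a; rewrite mem_filter => /andP[/negbNE/eqP].
Qed.

Lemma perm_bool (u v : seq bool) :
  size u = size v -> count id u = count id v -> perm_eq u v.
Proof.
move=> uv_size uv_count; apply/permP => q.
have count_bool w : count q w = q true * count id w + q false * count negb w.
  elim: w => [|b w IH] /=; first by rewrite !muln0.
  by rewrite IH; case: b; case: (q true); case: (q false) => /=; lia.
have count_negb w : count negb w = size w - count id w.
  by rewrite -(count_predC id w) addKn.
by rewrite !count_bool !count_negb uv_size uv_count.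
Qed.

Section Blocks.

Variable T : eqType.
Implicit Types (p : T * T) (s : seq (T * T)).

(* The blocks alternate: a possibly empty run of agreeing pairs, then a
   single disagreeing pair, and so on, ending with a run. *)
Fixpoint blocks s : seq (seq (T * T)) :=
  if s is p :: s' then
    let bs := blocks s' in
    if p.1 == p.2 then (p :: head [::] bs) :: behead bs
    else [::] :: [:: p] :: bs
  else [:: [::]].

Lemma flatten_blocks s : flatten (blocks s) = s.
Proof.
elim: s => [|p s IH] //=; case: eqP => _ //=; last by rewrite IH.
by move: IH; case: (blocks s) => [|b bs] /= <-.
Qed.

Lemma size_blocks s : size (blocks s) = (count (fun p => p.1 != p.2) s).*2.+1.
Proof. by elim: s => [|p s IH] //=; case: eqP => _ /=; rewrite ?size_behead IH. Qed.

Lemma head_blocks_agree s : all (fun p => p.1 == p.2) (head [::] (blocks s)).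
Proof. by elim: s => [|p s IH] //=; case: ifP => //= ->. Qed.

Lemma map_fst_snd_agree (r : seq (T * T)) :
  all (fun p => p.1 == p.2) r -> map fst r = map snd r.
Proof. by elim: r => [|p r IH] //= /andP[/eqP -> /IH ->]. Qed.

Lemma filter_blocks_neq s :
  [seq b <- blocks s | map fst b != map snd b] =
  [seq [:: p] | p <- s & p.1 != p.2].
Proof.
elim: s => [|p s IH] //=.
have := head_blocks_agree s; case: eqP => [p_agree | p_neq] b_agree; last first.
  by rewrite /= IH; case: eqP => // -[].
rewrite /= (map_fst_snd_agree _ b_agree) p_agree eqxx -IH.
by case: (blocks s) b_agree => [|b bs] //= /map_fst_snd_agree ->; rewrite eqxx.
Qed.

End Blocks.

Arguments blocks {T} s.

Lemma count_fst_neq (s : seq (bool * bool)) :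
  count fst s = count snd s ->
  count id [seq p.1 | p <- s & p.1 != p.2] =
  count id [seq p.2 | p <- s & p.1 != p.2].
Proof.
have split_count (a : pred (bool * bool)) :
    count a s = count (fun p => a p && (p.1 == p.2)) s
              + count (fun p => a p && (p.1 != p.2)) s.
  by elim: s => //= q s ->; case: (a q); case: eqP => _ /=; lia.
rewrite !count_map !count_filter (split_count fst) (split_count snd).
rewrite (@eq_count _ (fun p => p.1 && (p.1 == p.2)) (fun p => p.2 && (p.1 == p.2)))
  => [/addnI //|[a b] /=].
by case: eqP => [->|]; rewrite ?andbF.
Qed.

Lemma perm_blocks (s : seq (bool * bool)) :
  count fst s = count snd s ->
  perm_eq (map (map fst) (blocks s)) (map (map snd) (blocks s)).
Proof.
move=> same_weight; apply: perm_map_neq; rewrite filter_blocks_neq.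
have map_singletons (f : bool * bool -> bool) ds :
    map (map f) (map (fun p => [:: p]) ds) = map (fun b => [:: b]) (map f ds).
  by rewrite -!map_comp.
rewrite !map_singletons; apply/perm_map/perm_bool; first by rewrite !size_map.
exact: count_fst_neq.
Qed.

Theorem lemma1 (t n : nat) (C : {set n.-tuple bool}) :
  1 <= t -> 1 <= n -> t_BRC t C ->
  forall i : nat, 1 <= i <= n ->
  forall x y : n.-tuple bool,
    x \in C -> y \in C -> hweight x = i -> hweight y = i -> x != y ->
    (t.+2) %/ 2 <= hdist x y.
Proof.
move=> _ _ brc i _ x y xC yC wx wy xy; rewrite leqNgt; apply/negP => close.
apply: (brc x y xC yC xy).
have zip_fst : map fst (zip x y) = x by apply: unzip1_zip; rewrite !size_tuple.
have zip_snd : map snd (zip x y) = y by apply: unzip2_zip; rewrite !size_tuple.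
apply: (@confusable_pieces _ _ _ (map (map fst) (blocks (zip x y)))
                                 (map (map snd) (blocks (zip x y)))).
- by rewrite -map_flatten flatten_blocks.
- by rewrite -map_flatten flatten_blocks.
- by rewrite size_map size_blocks; move: close; rewrite /hdist; lia.
- apply: perm_blocks.
  have count_zip (f : bool * bool -> bool) :
      count f (zip x y) = count id (map f (zip x y)) by rewrite count_map.
  by rewrite !count_zip zip_fst zip_snd -/(hweight x) -/(hweight y) wx wy.
Qed.
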